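(* Let $Q$ be a quiver and $\theta\in\mathbb{Z}^{Q_0}$ with $\nabla(Q,\theta)\ne\emptyset$. Suppose $S\subset Q_0$ is such that there is at most one arrow $a$ with $a^+\in S$, $a^-\notin S$ and at most one arrow $b$ with $b^+\notin S$, $b^-\in S$. Then $a$ (if it exists) is contractable when $\theta(S)\ge0$, and $b$ (if it exists) is contractable when $\theta(S)\le0$, where $\theta(S)=\sum_{v\in S}\theta(v)$.
   Context: A quiver $Q$: vertices $Q_0$, arrows $Q_1$, $a$ from $a^-$ to $a^+$. $\nabla(Q,\theta)=\{x\in\mathbb{R}_{\ge0}^{Q_1}\mid\forall v:\ \theta(v)=\sum_{a^+=v}x(a)-\sum_{a^-=v}x(a)\}$. Contracting a non-loop arrow $a$ gives $(\hat Q,\hat\theta)$: delete $a$, glue $a^-$ and $a^+$ to a vertex $v$, $\hat\theta(v)=\theta(a^-)+\theta(a^+)$, $\hat\theta=\theta$ elsewhere. The arrow is contractable if $\nabla(Q,\theta)$ and $\nabla(\hat Q,\hat\theta)$ are integral-affinely equivalent, i.e. there is an affine isomorphism between their affine spans mapping the lattice points ($\mathbb{Z}^{Q_1}$, resp. $\mathbb{Z}^{\hat Q_1}$) of one span onto those of the other and one polyhedron onto the other. *)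

From mathcomp Require Import all_boot all_order all_algebra.
From mathcomp Require Import reals.
Set Implicit Arguments. Unset Strict Implicit. Unset Printing Implicit Defensive.
Import Order.TTheory GRing.Theory Num.Theory.
Local Open Scope ring_scope.

Section Defs.
Variable R : realType.

(* A quiver is given by a finite vertex type V, restricted to the vertex set
   [vs] (a predicate on V), a finite arrow type A and maps
   src (a^-), tgt (a^+) : A -> V.
   nabla(Q,θ) = { x in R_{>=0}^{Q_1} | forall v, θ(v) = Σ_{a^+=v} x(a) - Σ_{a^-=v} x(a) } *)
Definition nabla (V A : finType) (vs : pred V) (src tgt : A -> V)
    (th : V -> int) : (A -> R) -> Prop :=
  fun x => (forall e, 0 <= x e) /\
    forall v, vs v ->
      (th v)%:~R = \sum_(e | tgt e == v) x e - \sum_(e | src e == v) x e.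

Definition aff_span (A : finType) (P : (A -> R) -> Prop) : (A -> R) -> Prop :=
  fun y => exists (n : nat) (p : 'I_n -> A -> R) (l : 'I_n -> R),
    (forall i, P (p i)) /\ \sum_(i < n) l i = 1 /\
    forall e, y e = \sum_(i < n) l i * p i e.

Definition integral_pt (A : finType) (x : A -> R) : Prop :=
  exists z : A -> int, forall e, x e = (z e)%:~R.

Definition int_aff_equiv (A B : finType) (P : (A -> R) -> Prop)
    (P' : (B -> R) -> Prop) : Prop :=
  exists (M : B -> A -> R) (c : B -> R),
    let f := fun (x : A -> R) (b : B) => c b + \sum_(a : A) M b a * x a in
    [/\ forall x y, aff_span P x -> aff_span P y -> f x = f y -> x = y,
        forall x, aff_span P x -> aff_span P' (f x),
        forall y, aff_span P' y -> exists2 x, aff_span P x & f x = y,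
        forall x, aff_span P x -> (integral_pt x <-> integral_pt (f x))
      & forall x, aff_span P x -> (P x <-> P' (f x))].

(* Contraction of the arrow a of the quiver (V, A, src, tgt):
   delete a and glue a^- and a^+ into one vertex, represented by a^+
   (so the vertex set becomes V \ {a^-}); θ^(a^+) = θ(a^-) + θ(a^+). *)
Definition merge (V A : finType) (src tgt : A -> V) (a : A) (v : V) : V :=
  if v == src a then tgt a else v.

Definition contracted_nabla (V A : finType) (src tgt : A -> V) (th : V -> int)
    (a : A) : ({e : A | e != a} -> R) -> Prop :=
  nabla [pred v | v != src a]
    (fun e : {e : A | e != a} => merge src tgt a (src (val e)))
    (fun e : {e : A | e != a} => merge src tgt a (tgt (val e)))
    (fun v => if v == tgt a then th (src a) + th (tgt a) else th v).
Arguments contracted_nabla {V A} src tgt th a _.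

Definition contractable (V A : finType) (src tgt : A -> V) (th : V -> int)
    (a : A) : Prop :=
  src a != tgt a /\
  int_aff_equiv (nabla predT src tgt th) (contracted_nabla src tgt th a).

End Defs.

From Pilot Require Import Defs.
From mathcomp Require Import all_boot all_order all_algebra.
From mathcomp Require Import reals ring.
From mathcomp Require Import boolp.
Set Implicit Arguments. Unset Strict Implicit. Unset Printing Implicit Defensive.
Import Order.TTheory GRing.Theory Num.Theory.
Local Open Scope ring_scope.

(* Points of the affine span of nabla(Q,theta) still satisfy the conservation
   equations, so conservation at a^+ determines the value on a non-loop arrow a
   from the other values.  Hence restricting to the arrows other than a is an
   integral-affine isomorphism from that span onto the span of the contracted
   polytope, and it maps nabla(Q,theta) onto the contracted polytope as soon as
   every flow that is nonnegative off a is nonnegative on a.  If a is the only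
   arrow entering S, summing conservation over S gives
   x(a) = theta(S) + (sum of x over the arrows leaving S) >= 0 when theta(S) >= 0;
   reversing all arrows and negating theta turns b into such an arrow. *)

Section Netflow.
Variables (R : numDomainType) (V I : finType) (s t : I -> V).

Definition netflow (x : I -> R) (v : V) : R :=
  \sum_(e | t e == v) x e - \sum_(e | s e == v) x e.

Definition is_flow (th : V -> int) (x : I -> R) : Prop :=
  forall v, (th v)%:~R = netflow x v.

Lemma sum_pred_mul (P : pred I) (F : I -> R) :
  \sum_(e | P e) F e = \sum_e (P e)%:R * F e.
Proof. by rewrite big_mkcond; apply: eq_bigr => e _; case: (P e); rewrite ?mul1r ?mul0r. Qed.

Lemma netflowE x v : netflow x v = \sum_e ((t e == v)%:R - (s e == v)%:R) * x e.
Proof.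
rewrite /netflow (sum_pred_mul (fun e => t e == v)) (sum_pred_mul (fun e => s e == v)).
by rewrite -sumrB; apply: eq_bigr => e _; rewrite mulrBl.
Qed.

Lemma sum_natr_eq_in (S : {set V}) (u : V) : \sum_(v in S) ((u == v)%:R : R) = (u \in S)%:R.
Proof.
case: (boolP (u \in S)) => uS; last first.
  by rewrite big1 // => v vS; case: eqP uS => // ->; rewrite vS.
rewrite (bigD1 u) //= eqxx big1 ?addr0 // => v /andP[_ vu].
by rewrite eq_sym (negbTE vu).
Qed.

Lemma netflow_cut (S : {set V}) x :
  \sum_(v in S) netflow x v =
  \sum_(e | (t e \in S) && (s e \notin S)) x e -
  \sum_(e | (t e \notin S) && (s e \in S)) x e.
Proof.
rewrite (eq_bigr _ (fun v _ => netflowE x v)) exchange_big /=.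
rewrite (sum_pred_mul (fun e => (t e \in S) && (s e \notin S))).
rewrite (sum_pred_mul (fun e => (t e \notin S) && (s e \in S))) -sumrB.
apply: eq_bigr => e _; rewrite -mulr_suml sumrB !sum_natr_eq_in.
by case: (t e \in S); case: (s e \in S) => /=; ring.
Qed.

Lemma flow_into_cut_ge0 th (S : {set V}) x a :
  is_flow th x -> (forall e, e != a -> 0 <= x e) ->
  t a \in S -> s a \notin S -> (forall e, t e \in S -> s e \notin S -> e = a) ->
  0 <= \sum_(v in S) th v -> 0 <= x a.
Proof.
move=> fx x_ge0 ta sa a_uniq thS.
have := netflow_cut S x; rewrite -(eq_bigr _ (fun v _ => fx v)) -rmorph_sum.
rewrite (big_pred1 a) => [cut|e]; last first.
  by apply/andP/eqP => [[te se]|->]; [apply: a_uniq|].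
have -> : x a = (\sum_(v in S) th v)%:~R + \sum_(e | (t e \notin S) && (s e \in S)) x e.
  by rewrite cut subrK.
rewrite addr_ge0 ?ler0z // sumr_ge0 // => e /andP[_ se]; apply: x_ge0.
by apply: contraTneq se => ->.
Qed.

End Netflow.

Lemma is_flow_rev (R : numDomainType) (V I : finType) (s t : I -> V) th (x : I -> R) :
  is_flow s t th x -> is_flow t s (fun v => - th v) x.
Proof. by move=> fx v; rewrite intrN fx /netflow opprB. Qed.

Lemma aff_span_flow (R : realType) (V I : finType) (s t : I -> V) th
    (P : (I -> R) -> Prop) x :
  (forall p, P p -> is_flow s t th p) -> aff_span P x -> is_flow s t th x.
Proof.
move=> P_flow [n [p [l [Pp [l1 x_comb]]]]] v.
rewrite netflowE (eq_bigr (fun e => \sum_(i < n)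
  l i * (((t e == v)%:R - (s e == v)%:R) * p i e))); last first.
  by move=> e _; rewrite x_comb mulr_sumr; apply: eq_bigr => i _; ring.
have -> : (th v)%:~R = \sum_(i < n) l i * (th v)%:~R :> R.
  by rewrite -mulr_suml l1 mul1r.
rewrite exchange_big /=; apply: eq_bigr => i _.
by rewrite (P_flow _ (Pp i)) netflowE mulr_sumr.
Qed.

Lemma nablaT_flow (R : realType) (V I : finType) (s t : I -> V) th (x : I -> R) :
  nabla predT s t th x <-> (forall e, 0 <= x e) /\ is_flow s t th x.
Proof. by split=> -[x_ge0 fx]; split=> // v; apply: fx. Qed.

Section Contraction.
Variables (R : realType) (V A : finType) (src tgt : A -> V) (th : V -> int) (a : A).
Hypothesis src_neq_tgt : src a != tgt a.
Local Notation s := (src a).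
Local Notation t := (tgt a).
Local Notation A' := {e : A | e != a}.

Let msrc (b : A') := Defs.merge src tgt a (src (val b)).
Let mtgt (b : A') := Defs.merge src tgt a (tgt (val b)).
Let th' v := if v == t then th s + th t else th v.

Definition is_contracted_flow (y : A' -> R) : Prop :=
  forall v, v != s -> (th' v)%:~R = netflow msrc mtgt y v.

Lemma contracted_nablaE y : contracted_nabla src tgt th y <->
  (forall b, 0 <= y b) /\ is_contracted_flow y.
Proof. by []. Qed.

Definition restrict (x : A -> R) : A' -> R := fun b => x (val b).

Lemma sum_restrict (F : A -> R) : \sum_(b : A') F (val b) = \sum_(e | e != a) F e.
Proof.
rewrite [RHS](@reindex_omap _ _ _ A A' val insub) => [|e ea]; last by rewrite insubT.
by apply: eq_bigl => b; rewrite (valP b) valK eqxx.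
Qed.

Lemma merge_eq u v : v != s ->
  (Defs.merge src tgt a u == v) = if v == t then (u == t) || (u == s) else u == v.
Proof.
move=> vs; rewrite /Defs.merge; case: (eqVneq u s) => [->|us].
  by rewrite orbT [t == v]eq_sym; case: eqP => // _; rewrite eq_sym (negbTE vs).
by rewrite orbF; case: (eqVneq v t) => [->|].
Qed.

Lemma natr_eq_t_or_s u : ((u == t) || (u == s))%:R = (u == t)%:R + (u == s)%:R :> R.
Proof.
case: (eqVneq u t) => [->|_]; last by rewrite add0r.
by rewrite eq_sym (negbTE src_neq_tgt) addr0.
Qed.

Lemma netflow_restrict x v : v != s ->
  netflow msrc mtgt (restrict x) v =
  if v == t then netflow src tgt x t + netflow src tgt x s else netflow src tgt x v.
Proof.
move=> vs; rewrite netflowE (sum_restrict (fun e =>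
  ((Defs.merge src tgt a (tgt e) == v)%:R - (Defs.merge src tgt a (src e) == v)%:R) * x e)).
have ts : t != s by rewrite eq_sym.
case: (eqVneq v t) => [->|vt].
  rewrite !netflowE -big_split [RHS](bigD1 a) //= !eqxx (negbTE src_neq_tgt) (negbTE ts).
  rewrite -[LHS]add0r; congr (_ + _); first by rewrite /=; ring.
  apply: eq_bigr => e _; rewrite !merge_eq // eqxx.
  by rewrite !natr_eq_t_or_s; ring.
rewrite netflowE [RHS](bigD1 a) //= eq_sym (negbTE vt) eq_sym (negbTE vs).
rewrite -[LHS]add0r; congr (_ + _); first by rewrite /=; ring.
by apply: eq_bigr => e _; rewrite !merge_eq // (negbTE vt).
Qed.

Lemma restrict_flow x : is_flow src tgt th x -> is_contracted_flow (restrict x).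
Proof.
move=> fx v vs; rewrite netflow_restrict // /th'.
by case: eqP => _; rewrite ?intrD -!fx // addrC.
Qed.

Definition netflow_t_rest (T : pzRingType) (y : A' -> T) : T :=
  \sum_(b : A') ((tgt (val b) == t)%:R - (src (val b) == t)%:R) * y b.

(* A flow is determined off [a]: conservation at [a^+] fixes its value on [a]. *)
Definition lift (y : A' -> R) (e : A) : R :=
  oapp y ((th t)%:~R - netflow_t_rest y) (insub e).

Lemma lift_val y b : lift y (val b) = y b.
Proof. by rewrite /lift valK. Qed.

Lemma lift_a y : lift y a = (th t)%:~R - netflow_t_rest y.
Proof. by rewrite /lift insubF ?eqxx. Qed.

Lemma restrict_lift y : restrict (lift y) = y.
Proof. by apply: funext => b; rewrite /restrict lift_val. Qed.

Lemma netflow_t x : netflow src tgt x t = x a + netflow_t_rest (restrict x).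
Proof.
rewrite netflowE (bigD1 a) //= eqxx (negbTE src_neq_tgt) subr0 mul1r.
by rewrite -(sum_restrict (fun e => ((tgt e == t)%:R - (src e == t)%:R) * x e)).
Qed.

Lemma lift_restrict x : is_flow src tgt th x -> lift (restrict x) = x.
Proof.
move=> fx; apply: funext => e.
case: (eqVneq e a) => [->|ea]; last by rewrite /lift insubT.
by rewrite lift_a fx netflow_t addrK.
Qed.

Lemma lift_flow y : is_contracted_flow y -> is_flow src tgt th (lift y).
Proof.
move=> fy.
have flow_t : (th t)%:~R = netflow src tgt (lift y) t.
  by rewrite netflow_t restrict_lift lift_a subrK.
move=> v; case: (eqVneq v t) => [-> //|vt].
case: (eqVneq v s) => [->|vs]; last first.
  have := fy v vs; rewrite -{1}(restrict_lift y) netflow_restrict //.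
  by rewrite /th' (negbTE vt).
have ts : t != s by rewrite eq_sym.
have := fy t ts; rewrite -{1}(restrict_lift y) (netflow_restrict _ ts) /th' !eqxx.
by rewrite intrD -flow_t addrC => /addrI.
Qed.

Lemma lift_integral y : integral_pt y -> integral_pt (lift y).
Proof.
case=> z yz; exists (fun e => oapp z (th t - netflow_t_rest z) (insub e)) => e.
rewrite /lift; case: insubP => [b _ _ | _] /=; first exact: yz.
rewrite rmorphB rmorph_sum; congr (_ - _); apply: eq_bigr => b _.
by rewrite rmorphM rmorphB !rmorph_nat yz.
Qed.

Lemma aff_span_nabla_flow (x : A -> R) :
  aff_span (nabla predT src tgt th) x -> is_flow src tgt th x.
Proof. by apply: aff_span_flow => p /nablaT_flow[]. Qed.

Lemma restrict_nabla (x : A -> R) :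
  nabla predT src tgt th x -> contracted_nabla src tgt th (restrict x).
Proof. by case/nablaT_flow => x_ge0 fx; split=> [b|]; [exact: x_ge0 | exact: restrict_flow]. Qed.

Lemma lift_nabla y :
  (forall x : A -> R, is_flow src tgt th x -> (forall e, e != a -> 0 <= x e) -> 0 <= x a) ->
  contracted_nabla src tgt th y -> nabla predT src tgt th (lift y).
Proof.
move=> flow_ge0 /contracted_nablaE[y_ge0 fy]; apply/nablaT_flow.
have lift_ge0 e : e != a -> 0 <= lift y e by move=> ea; rewrite /lift insubT /=.
split=> [e|]; last exact: lift_flow.
by case: (eqVneq e a) => [->|]; [apply: flow_ge0; [exact: lift_flow|] | exact: lift_ge0].
Qed.

(* The witness map is the restriction to the arrows other than [a]; [lift] inverts it. *)
Lemma contractable_of_flow_ge0 :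
  (forall x : A -> R, is_flow src tgt th x -> (forall e, e != a -> 0 <= x e) -> 0 <= x a) ->
  contractable R src tgt th a.
Proof.
move=> flow_ge0; split=> //.
exists (fun (b : A') e => ((val b == e)%:R : R)), (fun _ => 0) => f.
have -> : f = restrict.
  apply: funext => x; apply: funext => b.
  rewrite /f add0r (bigD1 (val b)) //= eqxx mul1r big1 ?addr0 // => e eb.
  by rewrite eq_sym (negbTE eb) mul0r.
split.
- move=> x y /aff_span_nabla_flow fx /aff_span_nabla_flow fy xy.
  by rewrite -(lift_restrict fx) xy lift_restrict.
- move=> x [n [p [l [Pp [l1 x_comb]]]]].
  exists n, (fun i => restrict (p i)), l; split=> [i|]; first exact: restrict_nabla.
  by split=> // b; apply: x_comb.
- move=> y [n [p [l [Pp [l1 y_comb]]]]].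
  exists (fun e => \sum_(i < n) l i * lift (p i) e).
    by exists n, (fun i => lift (p i)), l; split=> // i; apply: lift_nabla.
  apply: funext => b; rewrite /restrict y_comb.
  by apply: eq_bigr => i _; rewrite lift_val.
- move=> x /aff_span_nabla_flow fx; split=> [[z xz]|/lift_integral].
    by exists (fun b => z (val b)) => b; apply: xz.
  by rewrite lift_restrict.
- move=> x /aff_span_nabla_flow fx; split; first exact: restrict_nabla.
  by move/(lift_nabla flow_ge0); rewrite lift_restrict.
Qed.

End Contraction.

Theorem proposition4p6 (R : realType) (V A : finType) (src tgt : A -> V)
    (th : V -> int) (S : {set V}) :
  (exists x : A -> R, nabla predT src tgt th x) ->
  (forall a a', tgt a \in S -> src a \notin S ->
                tgt a' \in S -> src a' \notin S -> a = a') ->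
  (forall b b', tgt b \notin S -> src b \in S ->
                tgt b' \notin S -> src b' \in S -> b = b') ->
  (forall a, tgt a \in S -> src a \notin S ->
     0 <= \sum_(v in S) th v -> contractable R src tgt th a) /\
  (forall b, tgt b \notin S -> src b \in S ->
     \sum_(v in S) th v <= 0 -> contractable R src tgt th b).
Proof.
move=> _ in_uniq out_uniq; split=> [a ta sa thS | b tb sb thS].
- apply: contractable_of_flow_ge0 => [|x fx x_ge0]; first by apply: contraNneq sa => ->.
  exact: (flow_into_cut_ge0 fx x_ge0 ta sa (fun e te se => in_uniq e a te se ta sa)).
- apply: contractable_of_flow_ge0 => [|x fx x_ge0]; first by apply: contraNneq tb => <-.
  apply: (flow_into_cut_ge0 (is_flow_rev fx) x_ge0 sb tb
    (fun e se te => out_uniq e b te se tb sb)).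
  by rewrite sumrN oppr_ge0.
Qed.
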